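(* Let $\mathcal{Z}\subset\mathbb{R}^n$ be closed, Clarke regular and $\alpha$-prox-regular for some $\alpha>0$, $G:\mathcal{Z}\to\mathbb{S}^n_+$ a continuous metric, and $f:\mathcal{Z}\to\mathbb{R}^n$ a continuous vector field. For $K>0$ consider the anti-windup approximation $$\dot z\in F_K(z):=f(P_\mathcal{Z}(z))-\tfrac1KG^{-1}(P_\mathcal{Z}(z))\big(z-P_\mathcal{Z}(z)\big)$$ and the projected dynamical system $\dot z=\Pi^G_\mathcal{Z}[f](z)$, $z\in\mathcal{Z}$. If $\bar z^\star\in\mathcal{Z}$ is a weak equilibrium of the projected dynamical system, then there exists $K^\star>0$ such that for all $K\in(0,K^\star)$ there exists a weak equilibrium point $z_K^\star\in\bar z^\star+N_{\bar z^\star}\mathcal{Z}\cap\tfrac{1}{2\alpha}\operatorname{int}\mathbb{B}$ of the anti-windup approximation. Conversely, if $z_K^\star\in\mathcal{Z}+\tfrac{1}{2\alpha}\operatorname{int}\mathbb{B}$ is a weak equilibrium of the anti-windup approximation for some $K>0$, then $P_\mathcal{Z}(z_K^\star)$ is a weak equilibrium of the projected dynamical system.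
   Context: $\operatorname{int}\mathbb{B}$ is the open unit ball; $\mathbb{S}^n_+$ the symmetric positive definite matrices; $\|u\|_{G(x)}:=(u^TG(x)u)^{1/2}$. $P_\mathcal{Z}(z)$ is the (possibly set-valued) Euclidean projection onto $\mathcal{Z}$; expressions with it range over its elements. $T_x\mathcal{Z}$ is the tangent cone; Clarke regular means $x\mapsto T_x\mathcal{Z}$ is inner semicontinuous; $N_x\mathcal{Z}$ is the polar of $T_x\mathcal{Z}$; $\alpha$-prox-regular means for all $x\in\mathcal{Z}$, $\eta\in N_x\mathcal{Z}$: $\langle\eta,y-x\rangle\le\alpha\|\eta\|\|y-x\|^2$ for all $y\in\mathcal{Z}$. $\Pi^G_\mathcal{Z}[f](x):=\arg\min_{v\in T_x\mathcal{Z}}\|v-f(x)\|_{G(x)}$. A point $z^\star$ is a weak equilibrium of a system if the constant trajectory $z\equiv z^\star$ is a (Carathéodory) solution of it; for the anti-windup approximation this is equivalent to $0\in F_K(z^\star)$. *)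

From HB Require Import structures.
From mathcomp Require Import all_boot all_order all_algebra.
From mathcomp Require Import all_classical all_reals all_analysis.
Set Implicit Arguments. Unset Strict Implicit. Unset Printing Implicit Defensive.
Import Order.TTheory GRing.Theory Num.Theory.
Import numFieldNormedType.Exports.
Local Open Scope classical_set_scope.
Local Open Scope ring_scope.

Section Defs.
Variables (R : realType) (n : nat).
Notation V := 'rV[R]_n.

Definition edot (u v : V) : R := (u *m v^T) 0 0.
Definition enorm (u : V) : R := Num.sqrt (edot u u).

Definition gnorm (M : 'M[R]_n) (u : V) : R := Num.sqrt ((u *m M *m u^T) 0 0).

Definition spd (M : 'M[R]_n) : Prop :=
  M^T = M /\ forall u : V, u != 0 -> 0 < (u *m M *m u^T) 0 0.

Definition tangent_cone (Z : set V) (x : V) : set V :=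
  [set v | exists (t : nat -> R) (w : nat -> V),
     [/\ (forall k, 0 < t k), t @ \oo --> (0 : R), w @ \oo --> v &
         forall k, Z (x + t k *: w k)]].

(* Clarke regular: x |-> T_x Z is inner semicontinuous on Z (sequential form) *)
Definition clarke_regular (Z : set V) : Prop :=
  forall x v (xs : nat -> V), Z x -> tangent_cone Z x v ->
    (forall k, Z (xs k)) -> xs @ \oo --> x ->
    exists vs : nat -> V,
      (forall k, tangent_cone Z (xs k) (vs k)) /\ vs @ \oo --> v.

Definition normal_cone (Z : set V) (x : V) : set V :=
  [set eta | forall v, tangent_cone Z x v -> edot eta v <= 0].

Definition prox_regular (Z : set V) (alpha : R) : Prop :=
  forall x eta y, Z x -> normal_cone Z x eta -> Z y ->
    edot eta (y - x) <= alpha * enorm eta * enorm (y - x) ^+ 2.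

Definition euclid_proj (Z : set V) (z : V) : set V :=
  [set p | Z p /\ forall y, Z y -> enorm (z - p) <= enorm (z - y)].

Definition proj_field (Z : set V) (G : V -> 'M[R]_n) (f : V -> V) (x : V)
  : set V :=
  [set v | tangent_cone Z x v /\
     forall w, tangent_cone Z x w -> gnorm (G x) (v - f x) <= gnorm (G x) (w - f x)].

Definition FK (Z : set V) (G : V -> 'M[R]_n) (f : V -> V) (K : R) (z : V)
  : set V :=
  [set f p - K^-1 *: ((z - p) *m invmx (G p)) | p in euclid_proj Z z].

Definition weak_eq_aw Z G f K (z : V) : Prop := FK Z G f K z 0.
Definition weak_eq_pds Z G f (z : V) : Prop := Z z /\ proj_field Z G f z 0.

End Defs.

From Pilot Require Import Defs.
From HB Require Import structures.
From mathcomp Require Import all_boot all_order all_algebra.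
From mathcomp Require Import all_classical all_reals all_analysis.
From mathcomp Require Import ring lra.
From mathcomp Require pseudometric_normed_Zmodule.
Import Order.TTheory GRing.Theory Num.Theory.
Import numFieldNormedType.Exports.
Local Open Scope classical_set_scope.
Local Open Scope ring_scope.

(* A point x of Z is an equilibrium of the projected system iff 0 is the
   G(x)-closest tangent vector to f(x), i.e. iff eta = f(x) G(x) lies in the
   polar N_x Z of the tangent cone.  Prox-regularity makes x the nearest point
   of Z to x + eta' for every normal eta' with 2 alpha |eta'| <= 1, and makes
   nearest points unique within distance 1/(2 alpha) of Z.  So for an
   equilibrium zbar the point zbar + K eta projects onto zbar for small K, and
   there F_K vanishes; conversely 0 in F_K(z) says f(p) G(p) = (z - p)/K, a
   proximal normal at the (unique) projection p of z.  The equilibrium of the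
   anti-windup system is explicit. *)

Set Implicit Arguments. Unset Strict Implicit.

Section BilinearForm.
Variables (R : realType) (n : nat).
Implicit Types (u v w : 'rV[R]_n) (M : 'M[R]_n).

Definition bilform M u v : R := (u *m M *m v^T) 0 0.

Lemma edot_mulmx M u v : edot (u *m M) v = bilform M u v.
Proof. by []. Qed.

Lemma edot_bilform u v : edot u v = bilform 1%:M u v.
Proof. by rewrite -edot_mulmx mulmx1. Qed.

Lemma bilformC M u v : M^T = M -> bilform M u v = bilform M v u.
Proof.
move=> symM; transitivity ((u *m M *m v^T)^T 0 0); first by rewrite mxE.
by rewrite !trmx_mul trmxK symM mulmxA.
Qed.

Lemma bilformDl M u1 u2 v : bilform M (u1 + u2) v = bilform M u1 v + bilform M u2 v.
Proof. by rewrite /bilform !mulmxDl mxE. Qed.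

Lemma bilformZl M a u v : bilform M (a *: u) v = a * bilform M u v.
Proof. by rewrite /bilform -!scalemxAl mxE. Qed.

Lemma bilformDr M u v1 v2 : bilform M u (v1 + v2) = bilform M u v1 + bilform M u v2.
Proof. by rewrite /bilform linearD /= mulmxDr mxE. Qed.

Lemma bilformZr M a u v : bilform M u (a *: v) = a * bilform M u v.
Proof. by rewrite /bilform linearZ /= -scalemxAr mxE. Qed.

Lemma bilformBl M u1 u2 v : bilform M (u1 - u2) v = bilform M u1 v - bilform M u2 v.
Proof. by rewrite -scaleN1r bilformDl bilformZl mulN1r. Qed.

Lemma bilformBr M u v1 v2 : bilform M u (v1 - v2) = bilform M u v1 - bilform M u v2.
Proof. by rewrite -scaleN1r bilformDr bilformZr mulN1r. Qed.

Lemma bilformNN M u : bilform M (- u) (- u) = bilform M u u.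
Proof. by rewrite -scaleN1r bilformZl bilformZr mulrA mulN1r opprK mul1r. Qed.

Lemma bilformBB M u v : M^T = M ->
  bilform M (u - v) (u - v) = bilform M u u - 2 * bilform M u v + bilform M v v.
Proof. by move=> symM; rewrite bilformBl !bilformBr (bilformC v u symM); ring. Qed.

End BilinearForm.

Section EuclideanNorm.
Variables (R : realType) (n : nat).
Implicit Types (u v : 'rV[R]_n).

Lemma edotC u v : edot u v = edot v u.
Proof. by rewrite !edot_bilform bilformC ?trmx1. Qed.

Lemma edotZl a u v : edot (a *: u) v = a * edot u v.
Proof. by rewrite !edot_bilform bilformZl. Qed.

Lemma edotZr a u v : edot u (a *: v) = a * edot u v.
Proof. by rewrite !edot_bilform bilformZr. Qed.

Lemma edotBB u v : edot (u - v) (u - v) = edot u u - 2 * edot u v + edot v v.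
Proof. by rewrite !edot_bilform bilformBB ?trmx1. Qed.

Lemma edot_sum u v : edot u v = \sum_j u 0 j * v 0 j.
Proof. by rewrite /edot mxE; apply: eq_bigr => j _; rewrite mxE. Qed.

Lemma edot_ge0 u : 0 <= edot u u.
Proof. by rewrite edot_sum sumr_ge0 // => j _; rewrite -expr2 sqr_ge0. Qed.

Lemma edot_eq0 u : (edot u u == 0) = (u == 0).
Proof.
apply/idP/eqP => [|->]; last by rewrite edot_sum big1 // => j _; rewrite mxE mul0r.
rewrite edot_sum psumr_eq0 => [/allP u0|j _]; last by rewrite -expr2 sqr_ge0.
apply/rowP => j; have /(_ (mem_index_enum j)) := u0 j.
by rewrite /= mulf_eq0 orbb mxE => /eqP.
Qed.

Lemma enorm_ge0 u : 0 <= enorm u.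
Proof. exact: sqrtr_ge0. Qed.

Lemma enorm_sqr u : enorm u ^+ 2 = edot u u.
Proof. by rewrite sqr_sqrtr // edot_ge0. Qed.

Lemma ler_enorm u v : (enorm u <= enorm v) = (edot u u <= edot v v).
Proof. by rewrite ler_sqrt // edot_ge0. Qed.

Lemma enormZ a u : 0 <= a -> enorm (a *: u) = a * enorm u.
Proof.
move=> a0; rewrite /enorm edotZl edotC edotZl mulrA sqrtrM ?mulr_ge0 //.
by rewrite -expr2 sqrtr_sqr ger0_norm.
Qed.

Lemma edot_cvg (u v : nat -> 'rV[R]_n) u0 v0 :
  u @ \oo --> u0 -> v @ \oo --> v0 ->
  (fun k => edot (u k) (v k)) @ \oo --> edot u0 v0.
Proof.
move=> uu0 vv0; have coord_cvg (w : nat -> 'rV[R]_n) (w0 : 'rV[R]_n) j :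
    w @ \oo --> w0 -> (fun k => w k 0 j) @ \oo --> w0 0 j.
  by move=> ww0; exact: (cvg_comp _ _ ww0 (@coord_continuous R 1 n 0 j w0)).
under eq_cvg do rewrite edot_sum.
rewrite edot_sum; apply: cvg_big => //.
  exact: (@pseudometric_normed_Zmodule.add_continuous R R^o).
by move=> j _; apply: cvgM; apply: coord_cvg.
Qed.

End EuclideanNorm.

Section SymmetricPositiveDefinite.
Variables (R : realType) (n : nat).
Implicit Types (u v : 'rV[R]_n) (M : 'M[R]_n).

Lemma spd_bilform_ge0 M u : spd M -> 0 <= bilform M u u.
Proof.
case=> _ Mpos; have [->|u0] := eqVneq u 0; last exact/ltW/Mpos.
by rewrite /bilform !mul0mx mxE.
Qed.

Lemma spd_unitmx M : spd M -> M \in unitmx.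
Proof.
case=> _ Mpos; rewrite unitmxE unitfE; apply/det0P => -[v v0 vM].
by have := Mpos v v0; rewrite vM mul0mx mxE ltxx.
Qed.

Lemma ler_gnorm M u v : spd M ->
  (Defs.gnorm M u <= Defs.gnorm M v) = (bilform M u u <= bilform M v v).
Proof. by move=> Mspd; rewrite ler_sqrt // spd_bilform_ge0. Qed.

End SymmetricPositiveDefinite.

Section Cones.
Variables (R : realType) (n : nat).
Implicit Types (Z : set 'rV[R]_n) (x z p u v : 'rV[R]_n).

Lemma tangent_cone0 Z x : Z x -> tangent_cone Z x 0.
Proof.
move=> Zx; exists (fun k => harmonic k), (fun=> 0); split.
- by move=> k; exact: harmonic_gt0.
- exact: cvg_harmonic.
- exact: cvg_cst.
- by move=> k; rewrite scaler0 addr0.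
Qed.

Lemma tangent_coneZ Z x v s : 0 < s -> tangent_cone Z x v -> tangent_cone Z x (s *: v).
Proof.
move=> s0 [t [w [t0 t_cvg w_cvg Zxtw]]].
exists (fun k => t k / s), (fun k => s *: w k); split.
- by move=> k; rewrite divr_gt0.
- by rewrite -(mul0r s^-1); apply: cvgMr_tmp.
- exact: cvgZl_tmp.
- by move=> k; rewrite scalerA mulrAC -mulrA divff ?gt_eqF ?mulr1.
Qed.

Lemma normal_coneZ Z x u s : 0 <= s -> normal_cone Z x u -> normal_cone Z x (s *: u).
Proof. by move=> s0 xu v xv; rewrite edotZl mulr_ge0_le0 // xu. Qed.

(* Comparing z - p with z - (p + t w) along a tangent sequence gives
   0 <= t |w|^2 - 2 <z - p, w>, and t -> 0. *)
Lemma euclid_proj_normal Z z p : euclid_proj Z z p -> normal_cone Z p (z - p).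
Proof.
move=> [Zp p_min] v [t [w [t0 t_cvg w_cvg Zptw]]].
have ineq k : 0 <= t k * edot (w k) (w k) - 2 * edot (z - p) (w k).
  have := p_min _ (Zptw k); rewrite ler_enorm opprD addrA [X in _ <= X]edotBB.
  rewrite !edotZr edotZl.
  by move=> le_t; rewrite -(pmulr_rge0 _ (t0 k)); nra.
have lim : (fun k => t k * edot (w k) (w k) - 2 * edot (z - p) (w k)) @ \oo -->
    0 * edot v v - 2 * edot (z - p) v.
  apply: cvgD; first by apply: cvgM => //; apply: edot_cvg.
  by apply: cvgN; apply: cvgMl_tmp; apply: edot_cvg => //; apply: cvg_cst.
have : 0 <= 0 * edot v v - 2 * edot (z - p) v by apply: (cvgr_to_ge lim); exact: nearW.
lra.
Qed.

End Cones.

Section ProxRegular.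
Variables (R : realType) (n : nat) (Z : set 'rV[R]_n) (alpha : R).
Hypothesis Z_prox : prox_regular Z alpha.
Implicit Types (x z p q u : 'rV[R]_n).

Lemma euclid_proj_normal_shift x u : Z x -> normal_cone Z x u ->
  2 * alpha * enorm u <= 1 -> euclid_proj Z (x + u) x.
Proof.
move=> Zx xu small_u; split=> // y Zy; rewrite addrAC subrr add0r ler_enorm.
have -> : x + u - y = u - (y - x) by rewrite opprB addrCA addrA.
rewrite [X in _ <= X]edotBB; have := Z_prox Zx xu Zy; rewrite enorm_sqr.
have := edot_ge0 (y - x); have := enorm_ge0 u; nra.
Qed.

(* With d := q - p, equality of the two distances gives |d|^2 = 2 <z - p, d>,
   which prox-regularity bounds by 2 alpha |z - p| |d|^2. *)
Lemma euclid_proj_unique z p q : 2 * alpha * enorm (z - p) < 1 ->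
  euclid_proj Z z p -> euclid_proj Z z q -> p = q.
Proof.
move=> near_z [Zp p_min] [Zq q_min].
have dist_eq : edot (z - q) (z - q) = edot (z - p) (z - p).
  by apply/eqP; rewrite eq_le -!ler_enorm q_min ?p_min.
have zq : z - q = (z - p) - (q - p) by rewrite opprB addrA subrK.
rewrite zq edotBB in dist_eq.
have := Z_prox Zp (euclid_proj_normal (conj Zp p_min)) Zq.
rewrite enorm_sqr => prox_pq.
have d0 := edot_ge0 (q - p); have e0 := enorm_ge0 (z - p).
have : edot (q - p) (q - p) == 0 by rewrite eq_le d0 andbT; nra.
by rewrite edot_eq0 subr_eq0 => /eqP.
Qed.

End ProxRegular.

Section ProjectedEquilibria.
Variables (R : realType) (n : nat) (Z : set 'rV[R]_n).
Variables (G : 'rV[R]_n -> 'M[R]_n) (f : 'rV[R]_n -> 'rV[R]_n).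

(* If B = <f(x), v>_G were positive for a tangent v, the tangent vector s v
   with s = B / (|v|_G^2 + 1) would be G(x)-closer to f(x) than 0. *)
Lemma proj_field0P x : spd (G x) -> Z x ->
  proj_field Z G f x 0 <-> normal_cone Z x (f x *m G x).
Proof.
move=> Gspd Zx; have symG := Gspd.1.
have optE w : Defs.gnorm (G x) (0 - f x) <= Defs.gnorm (G x) (w - f x) <->
    2 * bilform (G x) (f x) w <= bilform (G x) w w.
  rewrite ler_gnorm // sub0r bilformNN bilformBB // (bilformC _ _ symG).
  by split=> ?; lra.
split=> [[_ zero_opt] v xv | xfG].
  rewrite edot_mulmx leNgt; apply/negP => B_gt0.
  have q_ge0 := spd_bilform_ge0 v Gspd.
  set B := bilform _ _ v in B_gt0; set q := bilform _ v v in q_ge0.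
  have q1_gt0 : 0 < q + 1 by lra.
  have s_gt0 : 0 < B / (q + 1) by rewrite divr_gt0.
  have sq_lt : B / (q + 1) * q < B by rewrite mulrAC ltr_pdivrMr //; nra.
  have /optE := zero_opt _ (tangent_coneZ s_gt0 xv).
  rewrite bilformZr bilformZl bilformZr -/B -/q; move: s_gt0 sq_lt.
  set s := B / (q + 1); nra.
split; first exact: tangent_cone0.
move=> w xw; apply/optE; have := xfG w xw; rewrite edot_mulmx.
have := spd_bilform_ge0 w Gspd; lra.
Qed.

End ProjectedEquilibria.

Section AntiWindup.
Variables (R : realType) (n : nat) (Z : set 'rV[R]_n) (alpha : R).
Variables (G : 'rV[R]_n -> 'M[R]_n) (f : 'rV[R]_n -> 'rV[R]_n).
Hypotheses (Z_prox : prox_regular Z alpha) (G_spd : forall x, Z x -> spd (G x)).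

Lemma weak_eq_aw_shift x K : weak_eq_pds Z G f x -> 0 < K ->
  2 * alpha * enorm (K *: (f x *m G x)) <= 1 ->
  weak_eq_aw Z G f K (x + K *: (f x *m G x)).
Proof.
move=> [Zx /(proj_field0P _ (G_spd Zx) Zx) xfG] K_gt0 small.
exists x; first exact: euclid_proj_normal_shift (normal_coneZ (ltW K_gt0) xfG) small.
rewrite [_ - x]addrC addKr -scalemxAl scalerA mulVf ?gt_eqF // scale1r.
by rewrite mulmxK ?subrr //; apply/spd_unitmx/G_spd.
Qed.

Lemma weak_eq_pds_proj K z p : 0 < K -> weak_eq_aw Z G f K z ->
  euclid_proj Z z p -> 2 * alpha * enorm (z - p) < 1 -> weak_eq_pds Z G f p.
Proof.
move=> K_gt0 [p0 p0_proj F_p0] p_proj near_z.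
rewrite (euclid_proj_unique Z_prox near_z p_proj p0_proj).
have Zp0 := p0_proj.1; split=> //; apply/(proj_field0P _ (G_spd Zp0) Zp0).
move/subr0_eq: F_p0 => ->; rewrite -scalemxAl mulmxKV; last exact/spd_unitmx/G_spd.
apply: normal_coneZ; first by rewrite invr_ge0 ltW.
exact: euclid_proj_normal.
Qed.

End AntiWindup.

Unset Implicit Arguments. Set Strict Implicit.

Theorem proposition6p1 (R : realType) (n : nat) (Z : set 'rV[R]_n) (alpha : R)
  (G : 'rV[R]_n -> 'M[R]_n) (f : 'rV[R]_n -> 'rV[R]_n) :
  closed Z -> clarke_regular Z -> 0 < alpha -> prox_regular Z alpha ->
  (forall x, Z x -> spd (G x)) -> {within Z, continuous G} ->
  {within Z, continuous f} ->
  (forall zbar, weak_eq_pds Z G f zbar ->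
     exists2 Kstar : R, 0 < Kstar &
       forall K : R, 0 < K < Kstar ->
         exists zK : 'rV[R]_n,
           [/\ weak_eq_aw Z G f K zK,
               normal_cone Z zbar (zK - zbar) &
               enorm (zK - zbar) < (2 * alpha)^-1]) /\
  (forall (K : R) (zK : 'rV[R]_n), 0 < K ->
     (exists2 y, Z y & enorm (zK - y) < (2 * alpha)^-1) ->
     weak_eq_aw Z G f K zK ->
     forall p, euclid_proj Z zK p -> weak_eq_pds Z G f p).
Proof.
move=> _ _ alpha_gt0 Z_prox G_spd _ _.
have ltr_halfinv d : (d < (2 * alpha)^-1) = (2 * alpha * d < 1).
  by rewrite -[X in _ < X]mulr1 ltr_pdivlMl ?mulr_gt0.
split=> [zbar zbar_eq | K zK K_gt0 [y Zy zK_near] zK_eq p p_proj].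
  set eta := f zbar *m G zbar.
  have eta_normal : normal_cone Z zbar eta.
    by case: zbar_eq => Zzbar /(proj_field0P _ (G_spd _ Zzbar) Zzbar).
  have eta_ge0 := enorm_ge0 eta.
  have c_gt0 : 0 < 2 * alpha * (enorm eta + 1) by rewrite !mulr_gt0 ?ltr_wpDl.
  exists (2 * alpha * (enorm eta + 1))^-1; first by rewrite invr_gt0.
  move=> K /andP[K_gt0]; rewrite -[X in _ < X]mulr1 ltr_pdivlMl // => K_small.
  have K_eta_small : 2 * alpha * enorm (K *: eta) < 1 by rewrite enormZ ?ltW //; nra.
  exists (zbar + K *: eta); rewrite [_ - zbar]addrC addKr ltr_halfinv; split=> //.
    exact: weak_eq_aw_shift (ltW K_eta_small).
  exact: normal_coneZ (ltW K_gt0) eta_normal.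
have zK_p_near : 2 * alpha * enorm (zK - p) < 1.
  by rewrite -ltr_halfinv; apply: le_lt_trans zK_near; apply: p_proj.2.
exact: (weak_eq_pds_proj (f := f) Z_prox G_spd K_gt0 zK_eq p_proj zK_p_near).
Qed.
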